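(* Let $L$ be a finite archimedean extension of $\mathbb{Z}_\mathrm{max}$. Then $\mathrm{ui}(L/\mathbb{Z}_\mathrm{max})<\infty$.
   Context: A semifield is a commutative semiring in which every nonzero element is a unit. $\mathbb{Z}_\mathrm{max}=\mathbb{Z}\cup\{-\infty\}$ is the semifield with addition $\max$ and multiplication ordinary addition. An extension of a semifield $K$ is a semifield $L$ with an injective homomorphism $K\to L$ (identify $K$ with its image); it is finite if $L$ is a finitely generated $K$-semimodule. For idempotent $K$, the extension is archimedean if for every $x\in L$ there is $y\in K$ with $x+y=y$. The unit index is $\mathrm{ui}(L/K)=|L^\times/K^\times|$. *)

From HB Require Import structures.
From mathcomp Require Import all_boot all_order all_algebra.
Set Implicit Arguments. Unset Strict Implicit. Unset Printing Implicit Defensive.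
Import Order.TTheory GRing.Theory Num.Theory.
Local Open Scope ring_scope.

(* None represents -oo (the zero of Z_max), Some z represents z : int.  *)
Definition zmax := option int.
HB.instance Definition _ := Choice.on zmax.

Definition zmax_add (x y : zmax) : zmax :=
  match x, y with
  | None, _ => y
  | _, None => x
  | Some a, Some b => Some (Num.max a b)
  end.

Definition zmax_mul (x y : zmax) : zmax :=
  match x, y with
  | Some a, Some b => Some (a + b)
  | _, _ => None
  end.

Lemma zmax_addA : associative zmax_add.
Proof. by case=> [a|] [b|] [c|] //=; rewrite maxA. Qed.
Lemma zmax_addC : commutative zmax_add.
Proof. by case=> [a|] [b|] //=; rewrite maxC. Qed.
Lemma zmax_add0 : left_id (None : zmax) zmax_add.
Proof. by case. Qed.

HB.instance Definition _ := GRing.isNmodule.Build zmax zmax_addA zmax_addC zmax_add0.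

Lemma zmax_mulA : associative zmax_mul.
Proof. by case=> [a|] [b|] [c|] //=; rewrite addrA. Qed.
Lemma zmax_mulC : commutative zmax_mul.
Proof. by case=> [a|] [b|] //=; rewrite addrC. Qed.
Lemma zmax_mul1 : left_id (Some 0%R : zmax) zmax_mul.
Proof. by case=> [a|] //=; rewrite add0r. Qed.
Lemma zmax_mulDl : left_distributive zmax_mul zmax_add.
Proof.
case=> [a|] [b|] [c|] //=; congr Some.
by case: (leP a b) => h; [rewrite max_r ?lerD2r // | rewrite max_l ?lerD2r // ltW].
Qed.
Lemma zmax_mul0 : left_zero (None : zmax) zmax_mul.
Proof. by case. Qed.
Lemma zmax_one_neq0 : (Some 0%R : zmax) != None.
Proof. by []. Qed.

HB.instance Definition _ := GRing.Nmodule_isComNzSemiRing.Build zmax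
  zmax_mulA zmax_mulC zmax_mul1 zmax_mulDl zmax_mul0 zmax_one_neq0.

Definition is_unit (R : comNzSemiRingType) (x : R) : Prop := exists y : R, x * y = 1.

Definition semifield (R : comNzSemiRingType) : Prop :=
  forall x : R, x != 0 -> is_unit x.

Definition extension (K L : comNzSemiRingType) (f : {rmorphism K -> L}) : Prop :=
  semifield K /\ semifield L /\ injective f.

Definition finite_ext (K L : comNzSemiRingType) (f : {rmorphism K -> L}) : Prop :=
  exists (n : nat) (g : 'I_n -> L),
    forall x : L, exists c : 'I_n -> K, x = \sum_(i < n) f (c i) * g i.

(* Archimedean (for idempotent K): every x in L is bounded by some element
   of K, i.e. x + y = y for some y in K. *)
Definition archimedean_ext (K L : comNzSemiRingType) (f : {rmorphism K -> L}) : Prop :=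
  forall x : L, exists y : K, x + f y = f y.

(* ui(L/K) = |L^x / K^x| is finite: there are finitely many cosets of the
   image of K^x in the group L^x, i.e. finitely many representatives r_i
   such that every unit of L lies in some coset r_i * f(K^x). *)
Definition finite_unit_index (K L : comNzSemiRingType) (f : {rmorphism K -> L}) : Prop :=
  exists (n : nat) (r : 'I_n -> L),
    (forall i, is_unit (r i)) /\
    forall u : L, is_unit u -> exists (i : 'I_n) (k : K), is_unit k /\ u = r i * f k.

From HB Require Import structures.
From mathcomp Require Import all_boot all_order all_algebra.
Set Implicit Arguments. Unset Strict Implicit. Unset Printing Implicit Defensive.
Import Order.TTheory GRing.Theory Num.Theory.
Local Open Scope ring_scope.

(* Write t := f (Some 1), so that f (Some z) = t^z and L is idempotent.
   Archimedeanity bounds every generator g_i of L above by a power of t, and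
   applied to the inverses it bounds every nonzero generator below by a power
   of t; hence g_i <= t^M g_j for one M and all i and all nonzero g_j.  In a
   combination u = sum_i t^(c_i) g_i, let t^T g_j be the term of largest
   exponent: every term with T - c_i > M is absorbed by it, so
   u = t^T * sum_i t^(-e_i) g_i with each offset e_i in [0, M] or the term
   dropped.  These finitely many sums represent all cosets of L^x / Z^x. *)

Definition natle (V : nmodType) (x y : V) := x + y = y.

Section NaturalOrder.
Variable V : nmodType.
Implicit Types x y z : V.

Lemma natle0x x : natle 0 x.
Proof. by rewrite /natle add0r. Qed.

Lemma natle_trans y x z : natle x y -> natle y z -> natle x z.
Proof. by rewrite /natle => xy yz; rewrite -yz addrA xy. Qed.

Lemma natle_anti x y : natle x y -> natle y x -> x = y.
Proof. by rewrite /natle => xy yx; rewrite -yx addrC xy. Qed.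

Lemma natle_sum n (a : 'I_n -> V) s :
  (forall i, natle (a i) s) -> natle (\sum_i a i) s.
Proof.
move=> le_as; elim/big_ind: _ => //; first exact: natle0x.
by move=> x y xs ys; rewrite /natle -addrA ys.
Qed.

Hypothesis idemV : forall x : V, x + x = x.

Lemma natle_sum_term n (b : 'I_n -> V) j : natle (b j) (\sum_i b i).
Proof. by rewrite /natle (bigD1 j) //= addrA idemV. Qed.

Lemma big_drop_dominated n (a b : 'I_n -> V) j :
  (forall i, a i = b i \/ (b i = 0 /\ natle (a i) (b j))) ->
  \sum_i a i = \sum_i b i.
Proof.
move=> ab; apply: natle_anti; apply: natle_sum => i; case: (ab i).
- by move=> ->; apply: natle_sum_term.
- by move=> [_ le_ab]; apply: natle_trans le_ab (natle_sum_term _ _).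
- by move=> <-; apply: natle_sum_term.
- by move=> [-> _]; apply: natle0x.
Qed.

End NaturalOrder.

Lemma natle_mul2r (R : pzSemiRingType) (x y z : R) :
  natle x y -> natle (x * z) (y * z).
Proof. by rewrite /natle => xy; rewrite -mulrDl xy. Qed.

Lemma natle_mul2l (R : pzSemiRingType) (x y z : R) :
  natle x y -> natle (z * x) (z * y).
Proof. by rewrite /natle => xy; rewrite -mulrDr xy. Qed.

Lemma ex_common_bound n (P : 'I_n -> nat -> Prop) :
  (forall i m m', P i m -> (m <= m')%N -> P i m') ->
  (forall i, exists m, P i m) -> exists M, forall i, P i M.
Proof.
move=> P_up /fin_all_exists [m Pm]; exists (\max_i m i) => i.
exact: P_up (Pm i) (leq_bigmax i).
Qed.

Lemma is_unit_zmax (z : int) : is_unit (Some z : zmax).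
Proof. by exists (Some (- z)); rewrite /GRing.mul /= subrr. Qed.

Lemma finite_unit_index_of_cover (K L : comNzSemiRingType) (f : {rmorphism K -> L})
    (D : finType) (rep : D -> L) :
  semifield L ->
  (forall u, is_unit u -> exists d k, is_unit k /\ u = rep d * f k) ->
  finite_unit_index f.
Proof.
move=> semL cover.
pose r (i : 'I_#|D|) := if rep (enum_val i) == 0 then 1 else rep (enum_val i).
exists #|D|, r; split.
  by move=> i; rewrite /r; case: eqP => [_|/eqP]; [exists 1; rewrite mulr1 | exact: semL].
move=> u uU; have [d [k [kU def_u]]] := cover u uU.
exists (enum_rank d), k; split => //; rewrite /r enum_rankK; case: eqP => // rep0.
move: uU => [y]; rewrite def_u rep0 !mul0r => /esym/eqP; by rewrite oner_eq0.
Qed.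

Section ZmaxExtension.
Variables (L : comNzSemiRingType) (f : {rmorphism zmax -> L}).

Definition tpow (z : int) : L := f (Some z).

Lemma f_none : f None = 0.
Proof. exact: rmorph0. Qed.

Lemma zmax_ext_idem (x : L) : x + x = x.
Proof.
have one_idem : (1 : L) + 1 = 1 by rewrite -(rmorph1 f) -rmorphD.
by rewrite -{1 2}[x]mulr1 -mulrDr one_idem mulr1.
Qed.

Lemma tpowD a b : tpow (a + b) = tpow a * tpow b.
Proof. by rewrite /tpow -rmorphM. Qed.

Lemma tpow_le a b : a <= b -> natle (tpow a) (tpow b).
Proof. by move=> le_ab; rewrite /natle /tpow -rmorphD /GRing.add /= max_r. Qed.

Lemma tpow_le_nat (m m' : nat) : (m <= m')%N -> natle (tpow m) (tpow m').
Proof. by move=> le_mm'; apply: tpow_le; rewrite lez_nat. Qed.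

Lemma archimedean_tpow_bound :
  archimedean_ext f -> forall x : L, exists m : nat, natle x (tpow m).
Proof.
move=> arch x; have [[a|] le_xa] := arch x.
  by exists `|a|%N; apply: natle_trans le_xa (tpow_le (lez_abs a)).
by exists 0%N; move: le_xa; rewrite f_none addr0 => ->; apply: natle0x.
Qed.

Lemma generators_spread n (g : 'I_n -> L) :
  semifield L -> archimedean_ext f ->
  exists M : nat, forall i j, g j != 0 -> natle (g i) (tpow M * g j).
Proof.
move=> semL /archimedean_tpow_bound tbound.
have [A g_le] : exists A : nat, forall i, natle (g i) (tpow A).
  apply: ex_common_bound => [i m m' le_gm le_mm' | i]; last exact: tbound.
  exact: natle_trans le_gm (tpow_le_nat le_mm').
have [B ge_g] : exists B : nat, forall j, g j != 0 -> natle 1 (tpow B * g j).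
  apply: ex_common_bound => [j m m' le_1g le_mm' /le_1g | j].
    by move/natle_trans; apply; apply: natle_mul2r; apply: tpow_le_nat.
  have [/eqP-> | /semL[h gh1]] := boolP (g j == 0); first by exists 0%N.
  have [m le_hm] := tbound h; exists m => _.
  by rewrite -gh1 [tpow m * _]mulrC; apply: natle_mul2l.
exists (A + B)%N => i j /ge_g le_1g; apply: natle_trans (g_le i) _.
by rewrite PoszD tpowD -mulrA -{1}[tpow A]mulr1; apply: natle_mul2l.
Qed.

End ZmaxExtension.

(* The coefficient t^(-k) of an offset [k <= M]; [None] drops the term. *)
Definition offset_coef (M : nat) (o : option 'I_M.+1) : zmax :=
  if o is Some k then Some (- (k : nat)%:Z) else None.

Section Truncation.
Variables (L : comNzSemiRingType) (f : {rmorphism zmax -> L}) (n M : nat).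
Variable g : 'I_n -> L.
Hypothesis spread : forall i j, g j != 0 -> natle (g i) (tpow f M * g j).

Lemma truncate_combination (c : 'I_n -> zmax) :
  exists (d : {ffun 'I_n -> option 'I_M.+1}) (T : int),
    \sum_i f (c i) * g i = (\sum_i f (offset_coef (d i)) * g i) * tpow f T.
Proof.
pose P i := (c i != None) && (g i != 0).
have term0 i : ~~ P i -> f (c i) * g i = 0.
  by rewrite negb_and !negbK => /orP[/eqP-> | /eqP->]; rewrite ?f_none ?mul0r ?mulr0.
have [j0 Pj0 | noP] := pickP P; last first.
  exists [ffun=> None], 0; rewrite big1 => [|i _]; last exact/term0/negbT/noP.
  by rewrite big1 ?mul0r // => i _; rewrite ffunE f_none mul0r.
pose key i := odflt 0 (c i).
have [jm Pjm key_max] := arg_maxP key Pj0; set T := key jm.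
pose d : {ffun 'I_n -> option 'I_M.+1} :=
  [ffun i => if P i && (`|T - key i|%N <= M)%N then Some (inord `|T - key i|%N) else None].
exists d, T; rewrite mulr_suml.
apply: (big_drop_dominated (zmax_ext_idem f) (j := jm)) => i.
have djm : f (offset_coef (d jm)) = 1.
  by rewrite ffunE Pjm subrr /= inordK //= oppr0 (rmorph1 f).
rewrite djm mul1r ffunE; have [Pi | /negbTE nPi] := boolP (P i); last first.
  by right; rewrite /= f_none !mul0r term0 ?nPi //; split=> //; apply: natle0x.
move: (Pi) (key_max i Pi); rewrite /P /key /T.
case: (c i) => [a|] //= _ le_aT.
have dist_ge0 : 0 <= key jm - a by rewrite subr_ge0.
case: leqP => [le_dist | gt_dist].
  left; rewrite /= inordK ?ltnS // gez0_abs // opprB.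
  by rewrite mulrAC -[f (Some (a - _)) * _]/(tpow f _ * tpow f _) -tpowD subrK.
right; split; first by rewrite f_none !mul0r.
have gjm0 : g jm != 0 by case/andP: Pjm.
(* [a + M < T], so the dropped term t^a g_i <= t^(a+M) g_jm <= t^T g_jm. *)
apply: natle_trans (natle_mul2l (tpow f a) (spread i gjm0)) _.
rewrite mulrA -tpowD [g jm * _]mulrC; apply: natle_mul2r; apply: tpow_le.
by move: gt_dist; rewrite -(ltz_nat M) gez0_abs // ltrBrDr addrC => /ltW.
Qed.

End Truncation.

Theorem mainTheorem6 (L : comNzSemiRingType) (f : {rmorphism zmax -> L}) :
  extension f -> finite_ext f -> archimedean_ext f -> finite_unit_index f.
Proof.
move=> [_ [semL _]] [n [g gen_g]] arch.
have [M spread] := generators_spread g semL arch.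
apply: (@finite_unit_index_of_cover _ _ f {ffun 'I_n -> option 'I_M.+1}
          (fun d => \sum_i f (offset_coef (d i)) * g i) semL) => u _.
have [c ->] := gen_g u; have [d [T ->]] := truncate_combination spread c.
by exists d, (Some T); split; [apply: is_unit_zmax | rewrite /tpow].
Qed.
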